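(* Let $X$ be an $\operatorname{Irr}$-continuous $T_0$ space, $(x_i)_{i\in I}$ a net in $X$ and $y\in X$. Then $(x_i)_{i\in I}$ $\operatorname{Irr}$-converges to $y$ if and only if for each $x\in\twoheaddownarrow_{\operatorname{Irr}} y$ there is $k(x)\in I$ such that $x_i\ge x$ for all $i\ge k(x)$.
   Context: For a topological space $X$, a nonempty subset $E$ is irreducible if whenever $E\subseteq A_1\cup A_2$ with $A_1,A_2$ closed, $E\subseteq A_1$ or $E\subseteq A_2$. The specialisation order is $x\le y$ iff $x\in\operatorname{cl}(\{y\})$; $\uparrow x=\{z:z\ge x\}$; $\bigvee$ denotes supremum in this order. $\operatorname{Irr}^+(X)$ is the set of irreducible subsets whose supremum exists. $x\ll_{\operatorname{Irr}} y$ iff for every $E\in\operatorname{Irr}^+(X)$ with $\bigvee E\ge y$, $E\cap\uparrow x\ne\emptyset$; $\twoheaddownarrow_{\operatorname{Irr}} x=\{y:y\ll_{\operatorname{Irr}} x\}$. $X$ is $\operatorname{Irr}$-continuous if for every $x$, $\twoheaddownarrow_{\operatorname{Irr}} x$ is irreducible and $x=\bigvee\twoheaddownarrow_{\operatorname{Irr}} x$. A net $(x_i)_{i\in I}$ is a map from a preorder $(I,\le)$ to $X$. It $\operatorname{Irr}$-converges to $y$ if there is $E\in\operatorname{Irr}^+(X)$ with $\bigvee E\ge y$ such that for each $e\in E$ there is $k(e)\in I$ with $x_i\ge e$ for all $i\ge k(e)$. *)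

From HB Require Import structures.
From mathcomp Require Import all_boot all_order.
From mathcomp Require Import all_classical all_reals all_analysis.
Set Implicit Arguments. Unset Strict Implicit. Unset Printing Implicit Defensive.
Local Open Scope classical_set_scope.

Section IrrDefs.
Variable T : topologicalType.

Definition spec_le (x y : T) : Prop := closure [set y] x.

Definition upset (x : T) : set T := [set z | spec_le x z].

Definition is_sup (E : set T) (s : T) : Prop :=
  (forall e, E e -> spec_le e s) /\
  (forall u, (forall e, E e -> spec_le e u) -> spec_le s u).

Definition irreducible (E : set T) : Prop :=
  E !=set0 /\
  forall A1 A2 : set T, closed A1 -> closed A2 ->
    E `<=` A1 `|` A2 -> E `<=` A1 \/ E `<=` A2.

Definition IrrPlus (E : set T) : Prop := irreducible E /\ exists s, is_sup E s.

Definition irr_way_below (x y : T) : Prop :=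
  forall E, IrrPlus E ->
    (forall s, is_sup E s -> spec_le y s) -> (E `&` upset x) !=set0.

Definition irr_ddown (x : T) : set T := [set y | irr_way_below y x].

Definition Irr_continuous : Prop :=
  forall x, irreducible (irr_ddown x) /\ is_sup (irr_ddown x) x.

Definition Irr_converges (I : Type) (le : I -> I -> Prop) (net : I -> T) (y : T)
  : Prop :=
  exists E, IrrPlus E /\ (forall s, is_sup E s -> spec_le y s) /\
    forall e, E e -> exists k, forall i, le k i -> spec_le e (net i).

End IrrDefs.

(* If E witnesses Irr-convergence to y and x is Irr-way-below y, then E meets
   the upper set of x, so the net is eventually above x. Conversely, in an
   Irr-continuous space the set of points Irr-way-below y is itself an
   irreducible set with supremum y, hence a witness of Irr-convergence as soon
   as the net is eventually above each of its points. *)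
From mathcomp Require Import all_boot all_order.
From mathcomp Require Import all_classical all_reals all_analysis.
Local Open Scope classical_set_scope.

Section IrrConvergence.
Variable T : topologicalType.

Lemma spec_le_trans (x e w : T) : spec_le x e -> spec_le e w -> spec_le x w.
Proof.
move=> xe ew; have e_sub : [set e] `<=` closure [set w] by move=> z ->.
rewrite /spec_le (closure_id (closure [set w])).1; last exact: closed_closure.
exact: closureS e_sub _ xe.
Qed.

Variables (I : Type) (le : I -> I -> Prop) (net : I -> T).

Definition eventually_above (x : T) : Prop :=
  exists k, forall i, le k i -> spec_le x (net i).

Lemma eventually_above_trans (x e : T) :
  spec_le x e -> eventually_above e -> eventually_above x.
Proof. by move=> xe [k hk]; exists k => i /hk; exact: spec_le_trans. Qed.

Lemma Irr_converges_eventually_above (y : T) :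
  Irr_converges le net y -> forall x, irr_ddown y x -> eventually_above x.
Proof.
move=> [E [EIrr [Ey Eev]]] x xy.
have [e [Ee xe]] := xy E EIrr Ey.
exact: eventually_above_trans xe (Eev e Ee).
Qed.

Lemma Irr_continuous_ddown_IrrPlus (y : T) :
  Irr_continuous T -> IrrPlus (irr_ddown y).
Proof. by move=> /(_ y) [irr sup]; split => //; exists y. Qed.

Lemma Irr_continuous_ddown_sup_ge (y : T) :
  Irr_continuous T -> forall s, is_sup (irr_ddown y) s -> spec_le y s.
Proof. by move=> /(_ y) [_ [_ yleast]] s [sub _]; exact: yleast. Qed.

Lemma Irr_continuous_eventually_above_converges (y : T) :
  Irr_continuous T -> (forall x, irr_ddown y x -> eventually_above x) ->
  Irr_converges le net y.
Proof.
move=> cont ev; exists (irr_ddown y); split.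
  exact: Irr_continuous_ddown_IrrPlus.
by split; [exact: Irr_continuous_ddown_sup_ge | exact: ev].
Qed.

End IrrConvergence.

Theorem lemma4p3 (T : topologicalType) (T0 : kolmogorov_space T)
  (Hcont : Irr_continuous T)
  (I : Type) (le : I -> I -> Prop)
  (le_refl : forall i, le i i)
  (le_trans : forall i j k, le i j -> le j k -> le i k)
  (net : I -> T) (y : T) :
  Irr_converges le net y <->
  (forall x, irr_ddown y x -> exists k, forall i, le k i -> spec_le x (net i)).
Proof.
split; first exact: Irr_converges_eventually_above.
exact: Irr_continuous_eventually_above_converges.
Qed.
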